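(* Let $A\in\mathbb{F}_q^{m\times k}$ be a nonzero matrix and let $S\subseteq\mathbb{F}_q^n$ satisfy $|S|\ge q^{1+(1-\frac1k)n}$. Then there exist $(x_1,\dots,x_k),(y_1,\dots,y_k)\in S^k$ such that for all $b=(b_1,\dots,b_k)\in\mathbb{F}_q^k$ one has $b_1x_1+\dots+b_kx_k=b_1y_1+\dots+b_ky_k$ if and only if $b$ is a linear combination of the rows of $A$. *)

From HB Require Import structures.
From mathcomp Require Import all_boot all_order all_algebra all_field.
From mathcomp Require Import reals exp.
Set Implicit Arguments. Unset Strict Implicit. Unset Printing Implicit Defensive.

(* Choose x, y with the same image A X = A Y, where X, Y are the k x n matrices
   with rows x_i, y_i. Then b X = b Y for every b in the row space of A; the
   converse can only fail if D := X - Y is "degenerate": A D = 0 and b D = 0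
   for some b outside the row space. Each such b kills a q^-n fraction of
   ker A, so at most (q^k - 1) q^-n |ker A| matrices are degenerate. As
   |A *m _| * |ker A| <= q^(kn) and, raising the hypothesis to the k-th power,
   |S|^k q^n >= q^(k + kn), some fiber of X |-> A X on S^k is larger than
   that; the differences within a fiber are distinct, so one of them is not
   degenerate. *)

From HB Require Import structures.
From mathcomp Require Import all_boot all_order all_algebra all_field.
From mathcomp Require Import reals exp.
From mathcomp Require Import ring.

Set Implicit Arguments.
Unset Strict Implicit.
Unset Printing Implicit Defensive.
Import Order.TTheory GRing.Theory Num.Theory.
Local Open Scope ring_scope.

Lemma expn_le_of_powR_le (R : realType) (q s k n : nat) :
  (0 < k)%N -> (0 < q)%N ->
  (q%:R : R) `^ (1 + (1 - k%:R^-1) * n%:R) <= s%:R ->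
  (q ^ (k + k * n) <= s ^ k * q ^ n)%N.
Proof.
move=> k_gt0 q_gt0 hs.
set e := (1 + _ * _) in hs.
have hsk : (q%:R `^ e) ^+ k <= (s%:R : R) ^+ k.
  by apply: lerXn2r => //; rewrite nnegrE ?powR_ge0 ?ler0n.
rewrite -(ler_nat R) natrM !natrX.
apply: le_trans (ler_wpM2r _ hsk); last by rewrite exprn_ge0 // ler0n.
rewrite -!powR_mulrn ?ler0n ?powR_ge0 // -powRrM -powRD; last first.
  by rewrite pnatr_eq0 -lt0n q_gt0 implybT.
rewrite le_eqVlt; apply/orP; left; apply/eqP; congr (_ `^ _).
have k_neq0 : (k%:R : R) != 0 by rewrite pnatr_eq0 -lt0n.
by rewrite /e natrD natrM; field.
Qed.

Lemma exists_large_fiber (T U : finType) (g : T -> U) (X : {set T}) (N : nat) :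
  (#|g @: X| * N < #|X|)%N ->
  exists2 x, x \in X & (N < #|[set y in X | g y == g x]|)%N.
Proof.
move=> hX; apply/exists_inP; apply: contraLR hX => /exists_inPn small.
rewrite -leqNgt -sum1_card (partition_big_imset g) /= -sum_nat_const.
apply: leq_sum => _ /imsetP [x Xx ->].
by rewrite sum1dep_card leqNgt small.
Qed.

Lemma exists_image_notin (T U : finType) (h : T -> U) (X : {set T}) (B : {set U}) :
  {in X &, injective h} -> (#|B| < #|X|)%N -> exists2 x, x \in X & h x \notin B.
Proof.
move=> h_inj hX; apply/exists_inP; apply: contraLR hX => /exists_inPn hB.
rewrite -leqNgt -(card_in_imset h_inj); apply/subset_leq_card/subsetP.
by move=> _ /imsetP [x Xx ->]; rewrite -[_ \in _]negbK hB.
Qed.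

Section Kernel.
Variables (F : finFieldType) (m k n : nat) (A : 'M[F]_(m, k)).

Lemma not_submx_separator (b : 'rV[F]_k) : ~~ (b <= A)%MS ->
  exists c : 'cV[F]_k, A *m c = 0 /\ b *m c = 1%:M.
Proof.
rewrite submxE => /matrix0Pn [i [j bCij]].
have AC : A *m cokermx A = 0 by exact: mulmx_coker.
set C := cokermx A in bCij AC *; clearbody C.
exists (((b *m C) i j)^-1 *: (C *m delta_mx j 0)); split.
  by rewrite -scalemxAr mulmxA AC mul0mx scaler0.
rewrite -scalemxAr mulmxA -colE; apply/matrixP => i' j'.
by rewrite !ord1 !mxE; move: bCij; rewrite (ord1 i) mxE => /mulVf.
Qed.

Definition kerA := [set D : 'M[F]_(k, n) | A *m D == 0].

Definition kerA_killed_by (b : 'rV[F]_k) := [set D in kerA | b *m D == 0].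

Definition degenerate :=
  [set D in kerA | [exists b : 'rV[F]_k, ~~ (b <= A)%MS && (b *m D == 0)]].

Lemma mulmx_eq0_submx (D : 'M[F]_(k, n)) (b : 'rV[F]_k) :
  D \in kerA -> D \notin degenerate -> (b *m D = 0 <-> (b <= A)%MS).
Proof.
rewrite inE => /eqP AD; rewrite inE inE AD eqxx /= => /existsPn nondeg.
split => [bD | /submxP [w ->]]; last by rewrite -mulmxA AD mulmx0.
by apply: contraR (nondeg b) => bA; rewrite bA bD eqxx.
Qed.

(* Translating by c v, with c from [not_submx_separator], is injective on
   the pairs (D, v) because b recovers v. *)
Lemma card_kerA_killed_by (b : 'rV[F]_k) : ~~ (b <= A)%MS ->
  (#|kerA_killed_by b| * #|F| ^ n <= #|kerA|)%N.
Proof.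
move=> /not_submx_separator [c [Ac bc]].
pose h (p : 'M[F]_(k, n) * 'rV[F]_n) := p.1 + c *m p.2.
have -> : (#|kerA_killed_by b| * #|F| ^ n =
           #|setX (kerA_killed_by b) [set: 'rV[F]_n]|)%N.
  by rewrite cardsX cardsT card_mx mul1n.
rewrite -(card_in_imset (f := h)).
  apply/subset_leq_card/subsetP => _ /imsetP [[D v] /setXP [+ _] ->].
  rewrite !inE => /andP [/eqP AD _].
  by rewrite /h /= mulmxDr mulmxA Ac mul0mx AD addr0.
move=> [D1 v1] [D2 v2] /setXP [+ _] /setXP [+ _]; rewrite /h /= !inE.
move=> /andP [_ /eqP bD1] /andP [_ /eqP bD2] E.
have v12 : v1 = v2.
  by have := congr1 (mulmx b) E; rewrite !mulmxDr !mulmxA bD1 bD2 bc !mul1mx !add0r.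
by move: E; rewrite v12 => /addIr ->.
Qed.

Lemma card_degenerate :
  (#|degenerate| * #|F| ^ n <= (#|F| ^ k - 1) * #|kerA|)%N.
Proof.
pose P := [pred b : 'rV[F]_k | ~~ (b <= A)%MS].
have union_bound : (#|degenerate| <= \sum_(b in P) #|kerA_killed_by b|)%N.
  rewrite -sum1_card.
  apply: (@leq_trans (\sum_(D in degenerate) \sum_(b in P) (D \in kerA_killed_by b : nat))).
    apply: leq_sum => D; rewrite inE => /andP [kD /existsP [b /andP [Pb bD]]].
    by rewrite (bigD1 b) //= inE kD bD leq_addr.
  rewrite exchange_big /=; apply: leq_sum => b _.
  rewrite -sum1_card big_mkcond [X in (_ <= X)%N]big_mkcond /=.
  by apply: leq_sum => D _; case: (D \in degenerate); case: (D \in kerA_killed_by b).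
have card_P : (#|P| <= #|F| ^ k - 1)%N.
  have -> : (#|F| ^ k - 1 = #|predC1 (0%R : 'rV[F]_k)|)%N.
    by rewrite cardC1 card_mx mul1n subn1.
  apply/subset_leq_card/subsetP => b; rewrite !inE.
  by apply: contraNneq => ->; rewrite sub0mx.
apply: leq_trans (leq_mul union_bound (leqnn _)) _.
rewrite big_distrl /=.
apply: (@leq_trans (\sum_(b in P) #|kerA|)).
  by apply: leq_sum => b; apply: card_kerA_killed_by.
by rewrite sum_nat_const leq_mul2r card_P orbT.
Qed.

Lemma card_image_mulmx :
  (#|[set A *m X | X in [set: 'M[F]_(k, n)]]| * #|kerA| <= #|F| ^ (k * n))%N.
Proof.
set J := [set A *m X | X in _].
pose pre (c : 'M[F]_(m, n)) := odflt 0 [pick X | A *m X == c].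
have preK c : c \in J -> A *m pre c = c.
  move=> /imsetP [X0 _ ->]; rewrite /pre; case: pickP => [X /eqP //|].
  by move/(_ X0); rewrite eqxx.
pose h (p : 'M[F]_(m, n) * 'M[F]_(k, n)) := pre p.1 + p.2.
rewrite -cardsX -(card_in_imset (f := h)).
  by rewrite -card_mx -cardsT subset_leq_card // subsetT.
move=> [c1 D1] [c2 D2] /setXP [J1 +] /setXP [J2 +]; rewrite /h /= !inE.
move=> /eqP AD1 /eqP AD2 E.
have c12 : c1 = c2.
  by have := congr1 (mulmx A) E; rewrite !mulmxDr AD1 AD2 !addr0 !preK.
by move: E; rewrite c12 => /addrI ->.
Qed.

Definition mx_of_rows (f : {ffun 'I_k -> 'rV[F]_n}) : 'M[F]_(k, n) :=
  \matrix_i f i.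

Lemma mx_of_rows_inj : injective mx_of_rows.
Proof.
move=> f1 f2 E; apply/ffunP => i.
by have := congr1 (row i) E; rewrite !rowK.
Qed.

Lemma mulmx_mx_of_rows (b : 'rV[F]_k) (f : {ffun 'I_k -> 'rV[F]_n}) :
  \sum_(i < k) b 0 i *: f i = b *m mx_of_rows f.
Proof. by rewrite mulmx_sum_row; apply: eq_bigr => i _; rewrite rowK. Qed.

Lemma exists_nondegenerate_difference (S : {set 'rV[F]_n}) :
  (#|F| ^ (k + k * n) <= #|S| ^ k * #|F| ^ n)%N ->
  exists f f' : {ffun 'I_k -> 'rV[F]_n},
    [/\ f \in ffun_on S, f' \in ffun_on S,
        mx_of_rows f - mx_of_rows f' \in kerA &
        mx_of_rows f - mx_of_rows f' \notin degenerate].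
Proof.
move=> hS; set q := #|F| in hS.
pose T := [set f : {ffun 'I_k -> 'rV[F]_n} | f \in ffun_on S].
pose g f := A *m mx_of_rows f.
have many_tuples : (#|g @: T| * #|degenerate| < #|T|)%N.
  have img_le : (#|g @: T| <= #|[set A *m X | X in [set: 'M[F]_(k, n)]]|)%N.
    by apply/subset_leq_card/subsetP => _ /imsetP [f _ ->]; apply: imset_f.
  have q_gt0 : (0 < q)%N by apply/card_gt0P; exists 0.
  have qn_gt0 : (0 < q ^ n)%N by rewrite expn_gt0 q_gt0.
  have card_T : #|T| = (#|S| ^ k)%N by rewrite cardsE card_ffun_on card_ord.
  rewrite -(ltn_pmul2r qn_gt0) -mulnA card_T.
  apply: leq_ltn_trans (leq_mul img_le card_degenerate) _.
  rewrite mulnCA; apply: leq_ltn_trans (leq_mul (leqnn _) card_image_mulmx) _.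
  apply: leq_trans hS; rewrite expnD ltn_pmul2r ?expn_gt0 ?q_gt0 //.
  by rewrite ltn_subrL !expn_gt0 q_gt0.
have [f Tf big_fiber] := exists_large_fiber many_tuples.
have diff_inj : {in [set f' in T | g f' == g f] &,
                 injective (fun f' => mx_of_rows f - mx_of_rows f')}.
  by move=> f1 f2 _ _ /addrI /oppr_inj /mx_of_rows_inj.
have [f' + nondeg] := exists_image_notin diff_inj big_fiber.
rewrite !inE in Tf * => /andP [Tf' /eqP gff'].
exists f, f'; split => //.
by rewrite inE mulmxBr -/(g f) -/(g f') gff' subrr.
Qed.

End Kernel.

Theorem lemma4p1 (R : realType) (F : finFieldType) (m k n : nat)
    (A : 'M[F]_(m, k)) (S : {set 'rV[F]_n}) :
  A != 0 ->
  ((#|F|%:R : R) `^ (1 + (1 - (k%:R)^-1) * n%:R) <= (#|S|%:R : R)) ->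
  exists x y : 'I_k -> 'rV[F]_n,
    [/\ forall i, x i \in S,
        forall i, y i \in S &
        forall b : 'rV[F]_k,
          (\sum_(i < k) b 0 i *: x i = \sum_(i < k) b 0 i *: y i)
          <-> (b <= A)%MS].
Proof.
move=> A_neq0 hS.
have k_gt0 : (0 < k)%N by case: k A A_neq0 {hS} => // A; rewrite thinmx0 eqxx.
have q_gt0 : (0 < #|F|)%N by apply/card_gt0P; exists 0.
have [f [f' [/ffun_onP Sf /ffun_onP Sf' ker_diff nondeg]]] :=
  exists_nondegenerate_difference A (expn_le_of_powR_le k_gt0 q_gt0 hS).
exists f, f'; split => // b.
rewrite !mulmx_mx_of_rows -(mulmx_eq0_submx b ker_diff nondeg) mulmxBr.
by split => [->|/subr0_eq]; rewrite ?subrr.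
Qed.
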